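(* Assume the setting and standing assumptions described in the context. Let $0<\tau_i<\tau_{i+1}$ and let $M_{\tau_i}$, $M_{\tau_{i+1}}$ be the corresponding isochronous manifolds. Then for every $x\in M_{\tau_i}$ there exists a unique $\lambda_x\in(0,1)$ such that $\lambda_x x\in M_{\tau_{i+1}}$, and there is no $\kappa_x\geq 1$ such that $\kappa_x x\in M_{\tau_{i+1}}$.
   Context: Let $f:\mathbb{R}^n\times\mathbb{R}^m\to\mathbb{R}^n$ and a feedback law $\upsilon:\mathbb{R}^n\to\mathbb{R}^m$ be given. Define the extended (event-triggered) vector field $F:\mathbb{R}^{2n}\to\mathbb{R}^{2n}$ by $F(z,e)=\big(f(z,\upsilon(z+e)),\,-f(z,\upsilon(z+e))\big)$ (state $\xi=(\zeta,\varepsilon)$, where $\varepsilon$ is the measurement error). For $x\in\mathbb{R}^n$, $\xi(t;x)$ denotes the solution of $\dot\xi=F(\xi)$ with $\xi(0;x)=(x,0)$. A triggering function $\phi:\mathbb{R}^{2n}\to\mathbb{R}$ is given, and the inter-event time of $x$ is $\tau(x)=\inf\{t>0:\phi(\xi(t;x))=0\}$. The isochronous manifold of time $\tau_\star>0$ is $M_{\tau_\star}=\{x\in\mathbb{R}^n:\tau(x)=\tau_\star\}$. Standing assumptions: (i) $F$ is smooth and homogeneous of degree $\alpha\ge 1$ with all weights equal to $1$, i.e. $F(\lambda\xi)=\lambda^{\alpha+1}F(\xi)$ for all $\lambda>0$; (ii) $\phi$ is smooth and homogeneous of degree $\theta\geq1$ with weights $1$, i.e. $\phi(\lambda\xi)=\lambda^{\theta+1}\phi(\xi)$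 for all $\lambda>0$; (iii) for every $x\in\mathbb{R}^n\setminus\{0\}$, $\phi((x,0))<0$ and there exists $t_x\in(0,\infty)$ with $\phi(\xi(t_x;x))=0$; (iv) compact sets $\mathrm{Z}\subset\mathbb{R}^n$ and $\Xi\subset\mathbb{R}^{2n}$, each containing a neighbourhood of the origin, are given such that for all $x\in\mathrm{Z}$ and $t\ge0$, $\phi(\xi(t;x))\le 0$ implies $\xi(t;x)\in\Xi$; (v) the origin is the only equilibrium of $\dot\zeta=f(\zeta,\upsilon(\zeta))$. *)

From HB Require Import structures.
From mathcomp Require Import all_boot all_order all_algebra.
From mathcomp Require Import all_classical all_reals all_analysis.
Set Implicit Arguments. Unset Strict Implicit. Unset Printing Implicit Defensive.
Import Order.TTheory GRing.Theory Num.Theory.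
Import numFieldNormedType.Exports.
Local Open Scope classical_set_scope.
Local Open Scope ring_scope.

Fixpoint iter_dder {R : realType} {V W : normedModType R}
    (vs : seq V) (f : V -> W) : V -> W :=
  match vs with
  | [::] => f
  | v :: vs' => fun x => 'D_v (iter_dder vs' f) x
  end.

Definition smooth {R : realType} {V W : normedModType R} (f : V -> W) : Prop :=
  forall vs : seq V,
    continuous (iter_dder vs f) /\
    forall (v x : V), derivable (iter_dder vs f) x v.

Definition Fext {R : realType} {n m : nat}
    (f : 'rV[R]_n -> 'rV[R]_m -> 'rV[R]_n) (ups : 'rV[R]_n -> 'rV[R]_m)
    (xi : 'rV[R]_(n + n)) : 'rV[R]_(n + n) :=
  let z := lsubmx xi in
  let e := rsubmx xi in
  row_mx (f z (ups (z + e))) (- f z (ups (z + e))).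

Definition is_solution_map {R : realType} {n : nat}
    (F : 'rV[R]_(n + n) -> 'rV[R]_(n + n))
    (xi : 'rV[R]_n -> R -> 'rV[R]_(n + n)) : Prop :=
  forall x : 'rV[R]_n,
    xi x 0 = row_mx x 0 /\
    xi x t @[t --> 0^'+] --> xi x 0 /\
    (forall t : R, 0 < t -> is_derive t 1 (xi x) (F (xi x t))).

Definition inter_event_time {R : realType} {n : nat}
    (phi : 'rV[R]_(n + n) -> R) (xi : 'rV[R]_n -> R -> 'rV[R]_(n + n))
    (x : 'rV[R]_n) : R :=
  inf [set t : R | 0 < t /\ phi (xi x t) = 0].

Definition isochronous {R : realType} {n : nat}
    (phi : 'rV[R]_(n + n) -> R) (xi : 'rV[R]_n -> R -> 'rV[R]_(n + n))
    (tau_star : R) : set 'rV[R]_n :=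
  [set x | inter_event_time phi xi x = tau_star].

From HB Require Import structures.
From mathcomp Require Import all_boot all_order all_algebra.
From mathcomp Require Import all_classical all_reals all_analysis.
From mathcomp Require Import lra ring.
Import Order.TTheory GRing.Theory Num.Theory.
Import numFieldNormedType.Exports.
Local Open Scope classical_set_scope.
Local Open Scope ring_scope.

(** By homogeneity of F, t |-> lam xi(lam^alpha t; x) solves the extended
    system with initial state (lam x, 0); since F is C^1, hence locally
    Lipschitz, solutions are unique and xi(t; lam x) = lam xi(lam^alpha t; x).
    Homogeneity of phi then matches the zeros of phi along both trajectories,
    so tau(lam x) = lam^(-alpha) tau(x).  Consequently lam x lies on
    M_{tau_(i+1)} exactly when lam^alpha = tau_i / tau_(i+1) < 1, whose only
    positive solution lies in (0, 1), and every kappa >= 1 would give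
    tau(kappa x) <= tau_i < tau_(i+1). *)

Section MatrixNorm.
Context {R : realType} {m n : nat}.
Implicit Type A : 'M[R]_(m, n).

Lemma coord_le_mx_norm A i j : `|A i j| <= `|A|.
Proof.
rewrite [leRHS]/Num.Def.normr /= mx_normrE.
exact: le_trans (le_bigmax _ _ (i, j)).
Qed.

Lemma mx_norm_le A c : 0 <= c -> (forall i j, `|A i j| <= c) -> `|A| <= c.
Proof.
move=> c0 Ac; rewrite [leLHS]/Num.Def.normr /= mx_normrE.
by apply: bigmax_le => // -[i j] _; exact: Ac.
Qed.

End MatrixNorm.

Lemma compact_norm_le {R : realType} {V : normedModType R} (A : set V) :
  compact A -> exists K, forall x, A x -> `|x| <= K.
Proof.
move=> /compact_bounded [M [_ HM]]; exists (M + 1) => x Ax.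
by apply: (HM (M + 1)); rewrite ?ltrDl.
Qed.

Lemma closed_ball0_compact {R : realType} {N : nat} (r : R) : 0 < r ->
  compact [set p : 'rV[R]_N | `|p| <= r].
Proof.
move=> r0; apply: bounded_closed_compact.
  exists r; split; first by rewrite num_real.
  by move=> x rx p /= pr; apply: le_trans pr (ltW rx).
have -> : [set p : 'rV[R]_N | `|p| <= r] = closed_ball 0 r.
  rewrite closed_ballE //; apply/funext => p /=.
  by rewrite /closed_ball_ /= distrC subr0.
exact: closed_ball_closed.
Qed.

Section Derivatives.
Context {R : realType}.

Lemma is_derive_line {V W : normedModType R} (F : V -> W) (e p : V) (s : R) :
  derivable F (s *: e + p) e ->
  is_derive s 1 (fun s => F (s *: e + p)) ('D_e F (s *: e + p)).
Proof.
move=> dF.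
have E : (fun h : R => h^-1 *: (((fun s => F (s *: e + p)) \o shift s) (h *: 1)
                                 - F (s *: e + p)))
       = (fun h : R => h^-1 *: ((F \o shift (s *: e + p)) (h *: e) - F (s *: e + p))).
  apply/funext => h /=; congr (_ *: (F _ - _)).
  by rewrite /shift scalerDl -addrA [h *: 1]mulr1.
apply: DeriveDef; first by rewrite /derivable E.
by rewrite /derive E.
Qed.

Lemma is_derive_comp_scale {V : normedModType R} (y : R -> V) (c t : R) dy :
  is_derive (c * t) 1 y dy -> is_derive t 1 (fun s => y (c * s)) (c *: dy).
Proof.
case=> dy1 <-.
have dif : differentiable y (c * t) by apply/derivable1_diffP.
have Dc : 'D_c y (c * t) = c *: 'D_1 y (c * t).
  by rewrite !deriveE // -linearZ /= [c *: 1]mulr1.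
have -> : (fun s => y (c * s)) = (fun s => y (s *: c + 0)).
  by apply/funext => s; rewrite addr0 mulrC.
rewrite -Dc -[c * t]addr0 mulrC.
apply: is_derive_line; rewrite addr0 [t *: c]mulrC.
exact: diff_derivable.
Qed.

Lemma is_derive_coord {m n : nat} {M : R -> 'M[R]_(m, n)} {t : R} {dM} i j :
  is_derive t 1 M dM -> is_derive t 1 (fun s => M s i j) (dM i j).
Proof.
case=> dM1 <-; apply: DeriveDef; first by move/derivable_mxP: dM1; apply.
by rewrite derive_mx // mxE.
Qed.

Lemma norm_increment_le_mvt (g dg : R -> R) (a b K : R) :
  (forall s : R, is_derive s (1 : R) g (dg s)) ->
  (forall s, a <= s <= b -> `|dg s| <= K) ->
  a <= b -> `|g b - g a| <= K * (b - a).
Proof.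
move=> gd dgK ab.
have cg : {within `[a, b], continuous g}.
  apply: continuous_subspaceT => x; apply: differentiable_continuous.
  by apply/derivable1_diffP; case: (gd x).
have ab' : 0 <= b - a by rewrite subr_ge0.
have [c cab ->] := MVT_segment ab (fun x _ => gd x) cg.
rewrite normrM (ger0_norm ab') ler_wpM2r //.
by apply: dgK; move: cab; rewrite in_itv.
Qed.

End Derivatives.

Definition lipschitz_on_balls {R : realType} {V W : normedModType R} (F : V -> W) :=
  forall r : R, exists2 L : R, 0 <= L & L.-lipschitz_[set p | `|p| <= r] F.

Section LipschitzFromPartials.
Context {R : realType} {N M : nat}.
Implicit Types (a b p : 'rV[R]_N) (F : 'rV[R]_N -> 'rV[R]_M).

Lemma norm_increment_along_le F (e p : 'rV[R]_N) (d K : R) :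
  (forall s, derivable F (s *: e + p) e) ->
  (forall s, Num.min 0 d <= s <= Num.max 0 d -> `|'D_e F (s *: e + p)| <= K) ->
  `|F (d *: e + p) - F p| <= K * `|d|.
Proof.
move=> dF DK.
have K0 : 0 <= K.
  by apply: le_trans (DK 0 _) => //; rewrite ge_min lexx le_max lexx.
apply: mx_norm_le => [|i k]; first by rewrite mulr_ge0.
rewrite (ord1 i) !mxE.
pose g s := F (s *: e + p) ord0 k.
have gd s : is_derive s (1 : R) g ('D_e F (s *: e + p) ord0 k).
  exact/is_derive_coord/is_derive_line.
have dgK s : Num.min 0 d <= s <= Num.max 0 d -> `|'D_e F (s *: e + p) ord0 k| <= K.
  by move/DK; apply: le_trans; apply: coord_le_mx_norm.
have -> : F p ord0 k = g 0 by rewrite /g scale0r add0r.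
rewrite -/(g d); case: (leP 0 d) => d0.
  rewrite (ger0_norm d0) -[d in K * d]subr0.
  apply: norm_increment_le_mvt gd _ d0 => s /andP[s1 s2]; apply: dgK.
  by rewrite ge_min s1 le_max s2 orbT.
rewrite distrC (ltr0_norm d0) -[- d]add0r.
apply: norm_increment_le_mvt gd _ (ltW d0) => s /andP[s1 s2]; apply: dgK.
by rewrite ge_min s1 orbT le_max s2.
Qed.

Lemma partial_derives_bounded F {r : R} : 0 < r ->
  (forall v, continuous ('D_v F)) ->
  exists2 K, 0 <= K & forall i p, `|p| <= r -> `|'D_(delta_mx 0 i) F p| <= K.
Proof.
move=> r0 cF.
have /choice [K HK] : forall i : 'I_N, exists K : R,
    forall p, `|p| <= r -> `|'D_(delta_mx 0 i) F p| <= K.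
  move=> i; have cB := continuous_compact
    (continuous_subspaceT (cF (delta_mx 0 i))) (closed_ball0_compact _ r0).
  by have [K HK] := compact_norm_le _ cB; exists K => p pr; apply: HK; exists p.
exists (\big[Num.max/0]_i K i) => [|i p pr]; first exact: bigmax_ge_id.
exact: le_trans (HK i p pr) (le_bigmax _ _ _).
Qed.

(* Switching from a to b one coordinate at a time turns F b - F a into a sum of
   increments along coordinate axes, which only need partial derivatives. *)
Definition mix_row (j : nat) a b : 'rV[R]_N :=
  \row_k if (k < j)%N then b ord0 k else a ord0 k.

Lemma mix_row0 a b : mix_row 0 a b = a.
Proof. by apply/rowP => k; rewrite mxE. Qed.

Lemma mix_rowN a b : mix_row N a b = b.
Proof. by apply/rowP => k; rewrite mxE ltn_ord. Qed.

Lemma mix_rowS (j : 'I_N) a b :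
  mix_row j.+1 a b = (b ord0 j - a ord0 j) *: delta_mx 0 j + mix_row j a b.
Proof.
apply/rowP => k; rewrite !mxE ltnS eqxx /=.
case: (ltngtP k j) => kj.
- by rewrite -(inj_eq val_inj) (ltn_eqF kj) mulr0 add0r.
- by rewrite -(inj_eq val_inj) (gtn_eqF kj) mulr0 add0r.
- by rewrite (val_inj kj) eqxx mulr1 subrK.
Qed.

Lemma mix_row_segment_le (j : 'I_N) {a b} {r s : R} :
  `|a| <= r -> `|b| <= r ->
  Num.min 0 (b ord0 j - a ord0 j) <= s <= Num.max 0 (b ord0 j - a ord0 j) ->
  `|s *: delta_mx 0 j + mix_row j a b| <= r.
Proof.
move=> ar br sj.
have coord_le (c : 'rV[R]_N) k : `|c| <= r -> - r <= c ord0 k <= r.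
  by move=> cr; rewrite -ler_norml; exact: le_trans (coord_le_mx_norm _ _ _) cr.
apply: mx_norm_le => [|i k]; first exact: le_trans ar.
rewrite (ord1 i) !mxE eqxx /=.
have [->|kj] := eqVneq k j.
  rewrite ltnn mulr1 ler_norml.
  move: sj (coord_le _ j ar) (coord_le _ j br).
  case: (leP 0 (b ord0 j - a ord0 j)) => _ /andP[? ?] /andP[? ?] /andP[? ?];
    apply/andP; split; lra.
rewrite mulr0n mulr0 add0r.
by case: ifP => _; rewrite ler_norml coord_le.
Qed.

Lemma derivable_lipschitz_on_balls F :
  (forall x v, derivable F x v) -> (forall v, continuous ('D_v F)) ->
  lipschitz_on_balls F.
Proof.
move=> dF cF r.
have [K K0 DK] :=
  partial_derives_bounded F (ltr_pwDl ltr01 (normr_ge0 r)) cF.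
exists (K *+ N) => [|[a b] [/= ar br]]; first exact: mulrn_wge0.
rewrite distrC.
have -> : F b - F a = \sum_(j < N) (F (mix_row j.+1 a b) - F (mix_row j a b)).
  rewrite -(big_mkord xpredT (fun j => F (mix_row j.+1 a b) - F (mix_row j a b))).
  by rewrite telescope_sumr // mix_rowN mix_row0.
apply: le_trans (ler_norm_sum _ _ _) _.
rewrite mulrnAl -[N in _ *+ N]card_ord -sumr_const; apply: ler_sum => j _.
rewrite mix_rowS.
apply: le_trans (norm_increment_along_le _ _ _ _ K _ _) _.
- by move=> s; exact: dF.
- move=> s sj; apply: DK; apply: (le_trans (mix_row_segment_le j ar br sj)).
  by rewrite (le_trans (ler_norm r)) // lerDr.
rewrite ler_wpM2l // distrC.
by have := coord_le_mx_norm (a - b) ord0 j; rewrite !mxE.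
Qed.

End LipschitzFromPartials.

Section Gronwall.
Context {R : realType}.

Lemma within_segment0_continuous {V : normedModType R} (y : R -> V) (t0 : R) :
  0 < t0 -> y t @[t --> 0^'+] --> y 0 -> (forall t, 0 < t -> derivable y t 1) ->
  {within `[0, t0], continuous y}.
Proof.
move=> t00 y0 dy; apply/continuous_within_itvP => //; split => //.
- move=> s; rewrite in_itv => /andP[s0 _]; apply: differentiable_continuous.
  exact/derivable1_diffP/dy.
- apply: cvg_at_left_filter; apply: differentiable_continuous.
  exact/derivable1_diffP/dy.
Qed.

Lemma segment_norm_bounded {V : normedModType R} (y : R -> V) (t0 : R) :
  {within `[0, t0], continuous y} ->
  exists r, forall t, 0 <= t <= t0 -> `|y t| <= r.
Proof.
move=> cy.
have [r yr] := compact_norm_le _ (continuous_compact cy (@segment_compact _ 0 t0)).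
by exists r => t t0t; apply: yr; exists t; rewrite ?in_itv.
Qed.

Lemma gronwall_derive (g dg : R -> R) (C t0 : R) : 0 < t0 ->
  g t @[t --> 0^'+] --> g 0 ->
  (forall t : R, 0 < t -> is_derive t (1 : R) g (dg t)) ->
  (forall t, 0 < t < t0 -> dg t <= C * g t) ->
  g t0 <= g 0 * expR (C * t0).
Proof.
move=> t00 g0 gd dgC.
pose e t := expR (- C * t).
have ed t : is_derive t (1 : R) e (e t * - C).
  apply: (@is_derive1_comp _ expR (fun t => - C * t)).
  have := is_deriveZ (- C) (is_derive_id t (1 : R)).
  by rewrite [_ *: (1 : R)]mulr1.
have hd (t : R) : 0 < t -> is_derive t (1 : R) (e * g) (e t * (dg t - C * g t)).
  move=> t_gt0; apply: is_derive_eq; first exact: is_deriveM (ed t) (gd t t_gt0).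
  by rewrite /GRing.scale /=; ring.
have hc : {within `[0, t0], continuous (e * g)}.
  apply: within_segment0_continuous => // [|t t_gt0]; last by case: (hd t t_gt0).
  apply: cvgM g0; apply: cvg_at_right_filter; apply: differentiable_continuous.
  by apply/derivable1_diffP; case: (ed 0).
have : e t0 * g t0 <= e 0 * g 0.
  apply: (ler0_derive1_le_cc (f := e * g) _ _ hc); rewrite ?in_itv /= ?lexx ?ltW //.
  - by move=> s; rewrite in_itv => /andP[s0 _]; case: (hd s s0).
  move=> s; rewrite in_itv => /andP[s0 st].
  rewrite derive1E (@derive_val _ _ _ _ _ _ _ (hd s s0)).
  by rewrite /e pmulr_rle0 ?expR_gt0 // subr_le0; apply: dgC; exact/andP.
rewrite /e mulr0 expR0 mul1r mulNr expRN.
by rewrite -ler_pdivrMr ?expR_gt0 // mulrC.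
Qed.

End Gronwall.

Section SquaredEuclideanNorm.
Context {R : realType} {N : nat}.
Implicit Types v w : 'rV[R]_N.

(* The max norm of 'rV is not differentiable; this squared Euclidean norm is. *)
Definition sqr_l2norm v : R := \sum_k v ord0 k ^+ 2.

Lemma sqr_l2norm0 : sqr_l2norm 0 = 0.
Proof. by rewrite /sqr_l2norm big1 // => k _; rewrite mxE expr0n. Qed.

Lemma sqr_coord_le_sqr_l2norm v k : v ord0 k ^+ 2 <= sqr_l2norm v.
Proof.
by rewrite /sqr_l2norm (bigD1 k) //= lerDl sumr_ge0 // => j _; exact: sqr_ge0.
Qed.

Lemma sqr_mx_norm_le_sqr_l2norm v : `|v| ^+ 2 <= sqr_l2norm v.
Proof.
have [->|nz] := eqVneq `|v| 0.
  by rewrite expr0n /= sumr_ge0 // => j _; exact: sqr_ge0.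
have [[i k] vE] := mx_norm_neq0 nz.
by rewrite [`|v|]vE /= (ord1 i) real_normK ?num_real // sqr_coord_le_sqr_l2norm.
Qed.

Lemma sqr_l2norm_le0 v : sqr_l2norm v <= 0 -> v = 0.
Proof.
move=> v0; apply/rowP => k; rewrite mxE; apply/eqP; rewrite -sqrf_eq0 eq_le sqr_ge0.
by rewrite (le_trans (sqr_coord_le_sqr_l2norm v k)).
Qed.

Lemma continuous_sqr_l2norm : continuous sqr_l2norm.
Proof.
apply: continuous_big => [|k _]; first exact: add_continuous.
move=> v.
apply: (@continuous_comp _ _ _ (fun v : 'rV[R]_N => v ord0 k) (fun x => x ^+ 2)).
  exact: coord_continuous.
exact: exprn_continuous.
Qed.

Lemma is_derive_sqr_l2norm (u : R -> 'rV[R]_N) (t : R) du :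
  is_derive t (1 : R) u du ->
  is_derive t (1 : R) (sqr_l2norm \o u) (2 * \sum_k u t ord0 k * du ord0 k).
Proof.
move=> ud.
have -> : sqr_l2norm \o u = \sum_k (fun s => u s ord0 k) * (fun s => u s ord0 k).
  by apply/funext => s; rewrite fct_sumE; apply: eq_bigr => k _; rewrite expr2.
rewrite big_distrr /=; apply: is_derive_sum => k.
apply: is_derive_eq.
  exact: is_deriveM (is_derive_coord ord0 k ud) (is_derive_coord ord0 k ud).
by rewrite /GRing.scale /= mulr2n mulrDl mul1r mulrC.
Qed.

Lemma sum_coord_mul_le v w : \sum_k v ord0 k * w ord0 k <= N%:R * (`|v| * `|w|).
Proof.
rewrite mulr_natl -[N in _ *+ N]card_ord -sumr_const; apply: ler_sum => k _.
apply: le_trans (ler_norm _) _; rewrite normrM.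
by apply: ler_pM => //; exact: coord_le_mx_norm.
Qed.

End SquaredEuclideanNorm.

Lemma ode_solution_unique {R : realType} {N : nat} (F : 'rV[R]_N -> 'rV[R]_N)
    (y1 y2 : R -> 'rV[R]_N) :
  lipschitz_on_balls F -> y1 0 = y2 0 ->
  y1 t @[t --> 0^'+] --> y1 0 -> y2 t @[t --> 0^'+] --> y2 0 ->
  (forall t : R, 0 < t -> is_derive t (1 : R) y1 (F (y1 t))) ->
  (forall t : R, 0 < t -> is_derive t (1 : R) y2 (F (y2 t))) ->
  forall t : R, 0 <= t -> y1 t = y2 t.
Proof.
move=> F_lip y12_0 y1_0 y2_0 y1' y2' t; rewrite le_eqVlt => /predU1P[<-//|t_gt0].
have bounded (y : R -> 'rV[R]_N) : y s @[s --> 0^'+] --> y 0 ->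
    (forall s : R, 0 < s -> is_derive s (1 : R) y (F (y s))) ->
    exists r, forall s, 0 <= s <= t -> `|y s| <= r.
  move=> y0 y'; apply/segment_norm_bounded/within_segment0_continuous => // s s0.
  by case: (y' s s0).
have [r1 y1r] := bounded _ y1_0 y1'.
have [r2 y2r] := bounded _ y2_0 y2'.
have [L L0 FL] := F_lip (Num.max r1 r2).
pose u s := y1 s - y2 s.
have u' (s : R) : 0 < s -> is_derive s (1 : R) u (F (y1 s) - F (y2 s)).
  by move=> s0; exact: is_deriveB (y1' s s0) (y2' s s0).
have Fu s : 0 < s < t -> `|F (y1 s) - F (y2 s)| <= L * `|u s|.
  move=> /andP[s0 st]; have s_in : 0 <= s <= t by rewrite !ltW.
  by apply: (FL (y1 s, y2 s)); split; rewrite /= le_max ?y1r ?y2r ?orbT.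
apply/eqP; rewrite -subr_eq0; apply/eqP/sqr_l2norm_le0.
suff : sqr_l2norm (u t) <= sqr_l2norm (u 0) * expR (2 * (N%:R * L) * t).
  by rewrite /u y12_0 subrr sqr_l2norm0 mul0r.
have g' (s : R) : 0 < s -> is_derive s (1 : R) (sqr_l2norm \o u)
    (2 * \sum_k u s ord0 k * (F (y1 s) - F (y2 s)) ord0 k).
  by move=> s0; exact: is_derive_sqr_l2norm (u' s s0).
apply: (gronwall_derive _ _ _ _ t_gt0 _ g') => [|s st].
  apply: (@continuous_cvg _ _ _ _ _ u sqr_l2norm (u 0)).
    exact: continuous_sqr_l2norm.
  exact: cvgB.
rewrite -mulrA ler_wpM2l //; apply: le_trans (sum_coord_mul_le _ _) _.
rewrite -mulrA ler_wpM2l //; apply: le_trans (ler_wpM2l (normr_ge0 _) (Fu s st)) _.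
by rewrite mulrCA -expr2 ler_wpM2l // sqr_mx_norm_le_sqr_l2norm.
Qed.

Section HomogeneousFlow.
Context {R : realType}.

Lemma cvg_at_right0_scale {V : normedModType R} (y : R -> V) (c : R) : 0 < c ->
  y t @[t --> 0^'+] --> y 0 -> y (c * t) @[t --> 0^'+] --> y 0.
Proof.
move=> c0 /cvgrPdist_lt y0; apply/cvgrPdist_lt => e e0.
have [d /= d0 yd] := y0 e e0.
exists (d / c); first by rewrite /= divr_gt0.
move=> t /= td t0; apply: yd => /=; last by rewrite mulr_gt0.
by move: td; rewrite !sub0r !normrN normrM (gtr0_norm c0) ltr_pdivlMr // mulrC.
Qed.

Lemma solution_map_homogeneous {n : nat} {F : 'rV[R]_(n + n) -> 'rV[R]_(n + n)}
    {xi : 'rV[R]_n -> R -> 'rV[R]_(n + n)} {alpha : R} :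
  is_solution_map F xi -> lipschitz_on_balls F ->
  (forall lam y, 0 < lam -> F (lam *: y) = lam `^ (alpha + 1) *: F y) ->
  forall x lam, 0 < lam ->
  forall t, 0 <= t -> xi (lam *: x) t = lam *: xi x (lam `^ alpha * t).
Proof.
move=> sol F_lip F_hom x lam lam0.
have c0 : 0 < lam `^ alpha := powR_gt0 _ lam0.
have [xi0 [xi_0 xi']] := sol x.
have [xil0 [xil_0 xil']] := sol (lam *: x).
apply: (ode_solution_unique F (xi (lam *: x))
  (fun t => lam *: xi x (lam `^ alpha * t)) F_lip) => //.
- by rewrite xil0 mulr0 xi0 scale_row_mx scaler0.
- by rewrite mulr0; apply: cvgZl_tmp; exact: cvg_at_right0_scale.
move=> s s0.
have -> : F (lam *: xi x (lam `^ alpha * s)) =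
    lam *: (lam `^ alpha *: F (xi x (lam `^ alpha * s))).
  rewrite F_hom // scalerA powRD; last by rewrite (gt_eqF lam0) implybT.
  by rewrite powRr1 ?ltW // mulrC.
exact/is_deriveZ/is_derive_comp_scale/xi'/mulr_gt0.
Qed.

End HomogeneousFlow.

Section InterEventTime.
Context {R : realType}.

Lemma inf_preimage_scale (S : set R) (k : R) : 0 < k -> has_lbound S ->
  inf [set t | S (k * t)] = k^-1 * inf S.
Proof.
move=> k0 [l lS].
have kK t : k * (k^-1 * t) = t by rewrite mulrA mulfV ?gt_eqF // mul1r.
have [[s0 Ss0]|S0] := pselect (S !=set0); last first.
  have -> : [set t | S (k * t)] = set0.
    by apply/seteqP; split=> // t Skt; apply: S0; exists (k * t).
  have -> : S = set0 by apply/seteqP; split=> // t St; apply: S0; exists t.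
  by rewrite inf0 mulr0.
have lT : has_lbound [set t | S (k * t)].
  by exists (k^-1 * l) => t /= /lS; rewrite ler_pdivrMl.
apply/eqP; rewrite eq_le; apply/andP; split.
  rewrite -(ler_pM2l k0) kK; apply: lb_le_inf; first by exists s0.
  by move=> s Ss; rewrite -ler_pdivlMl //; apply: ge_inf => //=; rewrite kK.
apply: lb_le_inf => [|t /= Skt]; first by exists (k^-1 * s0) => /=; rewrite kK.
by rewrite ler_pdivrMl //; apply: ge_inf => //; exists l.
Qed.

Context {n : nat} {phi : 'rV[R]_(n + n) -> R}.
Context {xi : 'rV[R]_n -> R -> 'rV[R]_(n + n)}.
Context {alpha theta : R}.
Hypothesis xi_hom : forall x lam, 0 < lam ->
  forall t, 0 <= t -> xi (lam *: x) t = lam *: xi x (lam `^ alpha * t).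
Hypothesis phi_hom :
  forall lam y, 0 < lam -> phi (lam *: y) = lam `^ (theta + 1) * phi y.

Lemma inter_event_time_homogeneous x lam : 0 < lam ->
  inter_event_time phi xi (lam *: x) = (lam `^ alpha)^-1 * inter_event_time phi xi x.
Proof.
move=> lam0; have c0 : 0 < lam `^ alpha := powR_gt0 _ lam0.
rewrite /inter_event_time -inf_preimage_scale //; last by exists 0 => t [/ltW].
congr inf; apply/seteqP; split => t /= [t0 phi0].
  split; first by rewrite mulr_gt0.
  move: phi0; rewrite xi_hom ?ltW // phi_hom // => /eqP.
  by rewrite mulf_eq0 gt_eqF ?powR_gt0 //= => /eqP.
have t_gt0 : 0 < t by move: t0; rewrite pmulr_rgt0.
by split => //; rewrite xi_hom ?ltW // phi_hom // phi0 mulr0.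
Qed.

Lemma isochronous_scale tau tau' x lam : 0 < tau' -> 0 < lam ->
  isochronous phi xi tau x ->
  isochronous phi xi tau' (lam *: x) <-> lam `^ alpha = tau / tau'.
Proof.
move=> tau'0 lam0 Mx; rewrite /isochronous /= inter_event_time_homogeneous // Mx.
have c0 : lam `^ alpha != 0 by rewrite gt_eqF ?powR_gt0.
split=> [E|cE].
  have tau0 : tau != 0.
    by apply: contraTneq tau'0 => tau0; rewrite -E tau0 mulr0 ltxx.
  by rewrite -E invfM invrK mulrCA mulfV ?mulr1.
have tau0 : tau != 0 by apply: contraNneq c0; rewrite cE => ->; rewrite mul0r.
by rewrite cE invf_div divfK.
Qed.

End InterEventTime.

Lemma powR_eq_unique {R : realType} {alpha rho : R} : 0 < alpha -> 0 < rho < 1 ->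
  exists! lam, (0 < lam < 1) /\ lam `^ alpha = rho.
Proof.
move=> alpha0 /andP[rho0 rho1].
have root_eq : (rho `^ alpha^-1) `^ alpha = rho.
  by rewrite -powRrM mulVf ?gt_eqF // powRr1 ?ltW.
exists (rho `^ alpha^-1); split.
  split => //; rewrite powR_gt0 //=.
  have one_root : 1 `^ alpha^-1 = 1 :> R by rewrite powR1.
  by rewrite -[X in _ < X]one_root gt0_ltr_powR ?invr_gt0 ?nnegrE ?ltW.
move=> lam [/andP[lam0 _] lamE].
by apply: (powR_injective alpha0); rewrite ?nnegrE ?powR_ge0 ?ltW // root_eq.
Qed.

Theorem proposition2 (R : realType) (n m : nat)
    (f : 'rV[R]_n -> 'rV[R]_m -> 'rV[R]_n) (ups : 'rV[R]_n -> 'rV[R]_m)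
    (phi : 'rV[R]_(n + n) -> R) (xi : 'rV[R]_n -> R -> 'rV[R]_(n + n))
    (alpha theta : R) (Z : set 'rV[R]_n) (Xi : set 'rV[R]_(n + n)) :
  (* xi(t; x) is the solution of d/dt xi = F(xi), xi(0;x) = (x,0) *)
  is_solution_map (Fext f ups) xi ->
  (* (i) F smooth, homogeneous of degree alpha >= 1 *)
  smooth (Fext f ups) -> 1 <= alpha ->
  (forall (lam : R) (y : 'rV[R]_(n + n)), 0 < lam ->
     Fext f ups (lam *: y) = (lam `^ (alpha + 1)) *: Fext f ups y) ->
  (* (ii) phi smooth, homogeneous of degree theta >= 1 *)
  smooth phi -> 1 <= theta ->
  (forall (lam : R) (y : 'rV[R]_(n + n)), 0 < lam ->
     phi (lam *: y) = (lam `^ (theta + 1)) * phi y) ->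
  (* (iii) *)
  (forall x : 'rV[R]_n, x != 0 ->
     phi (row_mx x 0) < 0 /\ exists tx : R, 0 < tx /\ phi (xi x tx) = 0) ->
  (* (iv) *)
  compact Z -> nbhs (0 : 'rV[R]_n) Z ->
  compact Xi -> nbhs (0 : 'rV[R]_(n + n)) Xi ->
  (forall (x : 'rV[R]_n) (t : R), Z x -> 0 <= t ->
     phi (xi x t) <= 0 -> Xi (xi x t)) ->
  (* (v) the origin is the only equilibrium of d/dt z = f(z, ups z) *)
  (forall z : 'rV[R]_n, f z (ups z) = 0 <-> z = 0) ->
  forall tau_i tau_i1 : R, 0 < tau_i -> tau_i < tau_i1 ->
  forall x : 'rV[R]_n, isochronous phi xi tau_i x ->
    (exists! lam : R, (0 < lam < 1) /\ isochronous phi xi tau_i1 (lam *: x)) /\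
    ~ (exists kappa : R, 1 <= kappa /\ isochronous phi xi tau_i1 (kappa *: x)).
Proof.
move=> sol F_smooth alpha_ge1 F_hom _ _ phi_hom _ _ _ _ _ _ _
  tau_i tau_i1 tau_i_gt0 tau_lt x Mx.
have F_lip : lipschitz_on_balls (Fext f ups).
  apply: derivable_lipschitz_on_balls => [y v|v]; first exact: (F_smooth [::]).2.
  exact: (F_smooth [:: v]).1.
have alpha_gt0 : 0 < alpha := lt_le_trans ltr01 alpha_ge1.
have tau_i1_gt0 : 0 < tau_i1 := lt_trans tau_i_gt0 tau_lt.
have xi_hom := solution_map_homogeneous sol F_lip F_hom.
have M_scale lam : 0 < lam ->
    isochronous phi xi tau_i1 (lam *: x) <-> lam `^ alpha = tau_i / tau_i1.
  by move=> lam_gt0; apply: (isochronous_scale xi_hom phi_hom).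
have rho01 : 0 < tau_i / tau_i1 < 1.
  by rewrite divr_gt0 //= ltr_pdivrMr // mul1r.
split.
  have [lam [[/andP[lam_gt0 lam_lt1] lamE] lam_uniq]] :=
    powR_eq_unique alpha_gt0 rho01.
  exists lam; split=> [|mu [/andP[mu_gt0 mu_lt1] Mmu]].
    by split; [rewrite lam_gt0 | apply/M_scale].
  by apply: lam_uniq; split; [rewrite mu_gt0 | apply/M_scale].
case=> kappa [kappa_ge1 Mk].
have kappa_gt0 : 0 < kappa := lt_le_trans ltr01 kappa_ge1.
have : 1 `^ alpha <= kappa `^ alpha.
  by apply: ge0_ler_powR; rewrite ?nnegrE ?(ltW alpha_gt0) ?(ltW kappa_gt0).
rewrite powR1 (iffLR (M_scale _ kappa_gt0) Mk) leNgt.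
by case/andP: rho01 => _ ->.
Qed.
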